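(* Let $s$ be a positive integer. There exists a linear $(2,s-1,s,2)$-AONT if and only if $s\ge4$.
   Context: For integers $1\le t_i\le t_o\le s$, a linear $(t_i,t_o,s,q)$-AONT is given by an invertible $s\times s$ matrix $M$ over $\mathbb{F}_q$ defining the map $\mathbf{x}\mapsto\mathbf{y}=\mathbf{x}M^{-1}$ on row vectors of $\mathbb{F}_q^s$, such that for every set $I$ of $t_i$ input coordinates and every set $J$ of $s-t_o$ output coordinates, the pair $((x_i)_{i\in I},(y_j)_{j\in J})$ takes every value in $\mathbb{F}_q^{t_i+s-t_o}$ equally often as $\mathbf{x}$ ranges over $\mathbb{F}_q^s$. Equivalently, $M$ is invertible and every $t_o\times t_i$ submatrix of $M$ has rank $t_i$. (Such an object requires $t_i\le t_o$, so none exists with $t_i=2>t_o=s-1$.) *)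

From mathcomp Require Import all_boot all_algebra.
Set Implicit Arguments. Unset Strict Implicit. Unset Printing Implicit Defensive.
Import GRing.Theory.
Local Open Scope ring_scope.

Definition submx_set (F : fieldType) (s : nat) (M : 'M[F]_s)
    (I J : {set 'I_s}) : 'M[F]_(#|I|, #|J|) :=
  \matrix_(i < #|I|, j < #|J|) M (@enum_val _ (mem I) i) (@enum_val _ (mem J) j).

(* M defines a linear (ti, to, s, q)-AONT over F (with q = #|F|):
   1 <= ti <= to <= s, M invertible, and every to x ti submatrix has rank ti. *)
Definition linear_AONT (F : fieldType) (ti to s : nat) (M : 'M[F]_s) : Prop :=
  [/\ (1 <= ti)%N, (ti <= to)%N, (to <= s)%N, M \in unitmx &
    forall I J : {set 'I_s}, #|I| = to -> #|J| = ti ->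
      \rank (submx_set M I J) = ti].

From mathcomp Require Import all_boot all_algebra zify.
Set Implicit Arguments.
Unset Strict Implicit.
Unset Printing Implicit Defensive.
Import GRing.Theory.
Local Open Scope ring_scope.

(** Over F_2 two columns u, v restricted to a set of rows are independent iff
    u, v and u + v are all nonzero there.  An (s-1)-subset of rows omits a
    single row, so M is a linear (2, s-1, s, 2)-AONT iff it is invertible,
    every column has at least two nonzero entries and any two columns differ
    in at least two rows.  For s = 3 an all-ones column would be at distance
    at most one from every other column of weight at least two, so every
    column has exactly two ones and the all-ones row vector lies in the left
    kernel of M.  For
    s >= 4 take the complement of I + C, C the permutation matrix of the
    3-cycle (0 1 2): column j has the zero set {j, j - 1} (j < 3) or {j}
    (j >= 3), two such sets differ in at least two rows, and if
    x (J + I + C) = 0 then summing the equations around the odd cycle forces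
    x 1^T = 0, whence x = 0. *)

Lemma det_mx22 (R : comNzRingType) (A : 'M[R]_2) :
  \det A = A 0 0 * A 1 1 - A 0 1 * A 1 0.
Proof.
rewrite (expand_det_row _ 0) !big_ord_recl big_ord0 addr0 /cofactor !det_mx11 !mxE /=.
rewrite expr0 expr1 !mul1r mulN1r mulrN.
by congr (_ * _ - _ * _); congr (A _ _); apply/val_inj.
Qed.

Lemma sum_mulr_natr_bool (R : pzSemiRingType) (I : finType) (P : pred I) (F : I -> R) :
  \sum_i F i * (P i)%:R = \sum_(i | P i) F i.
Proof.
rewrite [RHS]big_mkcond; apply: eq_bigr => i _.
by case: (P i); rewrite ?mulr1 ?mulr0.
Qed.

Lemma card_gt1_meets_setC1 (T : finType) (x0 : T) (A : {set T}) :
  (1 < #|A|)%N <->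
  (forall I : {set T}, #|I| = #|T|.-1 -> exists2 i, i \in I & i \in A).
Proof.
split=> [/card_gt1P [x [y [xA yA neq_xy]]] I cardI | meets].
  have [r ->] : exists r, I = [set~ r].
    have /cards1P [r Ir] : #|~: I| == 1%N.
      have := cardsC I; have : (0 < #|T|)%N by apply/card_gt0P; exists x0.
      lia.
    by exists r; rewrite -Ir setCK.
  case: (x =P r) => [xr | /eqP neq_xr]; [exists y | exists x] => //.
    by rewrite !inE -xr eq_sym.
  by rewrite !inE.
have [x xI xA] := meets _ (cardsC1 x0).
have [y yI yA] := meets _ (cardsC1 x).
by apply/card_gt1P; exists x, y; move: yI; rewrite !inE eq_sym.
Qed.

Lemma card_gt1_ord s (P : pred nat) (i j : nat) :
  (i < s)%N -> (j < s)%N -> i != j -> P i -> P j -> (1 < #|[set k : 'I_s | P k]|)%N.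
Proof.
move=> lt_is lt_js neq_ij Pi Pj; apply/card_gt1P.
by exists (Ordinal lt_is), (Ordinal lt_js); rewrite !inE.
Qed.

Section SubmatrixRank.
Variables (F : fieldType) (s : nat) (M : 'M[F]_s) (I J : {set 'I_s}).

Lemma rank_submx_ge2 r1 r2 a b : r1 \in I -> r2 \in I -> a \in J -> b \in J ->
  M r1 a * M r2 b - M r1 b * M r2 a != 0 -> (2 <= \rank (submx_set M I J))%N.
Proof.
move=> r1I r2I aJ bJ minor_neq0.
pose f (k : 'I_2) := if k == 0 then enum_rank_in r1I r1 else enum_rank_in r1I r2.
pose g (k : 'I_2) := if k == 0 then enum_rank_in aJ a else enum_rank_in aJ b.
have minor_unit : mxsub f g (submx_set M I J) \in unitmx.
  by rewrite unitmxE det_mx22 unitfE !mxE /f /g /= !enum_rankK_in.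
have factor : mxsub f g (submx_set M I J)
    = rowsub f 1%:M *m (submx_set M I J *m colsub g 1%:M).
  by rewrite mulmx_colsub mulmx1 -mxsub_mul mul1mx.
rewrite -(mxrank_unit minor_unit) factor.
exact: leq_trans (mxrankM_maxr _ _) (mxrankM_maxl _ _).
Qed.

Lemma rank_submx_le1 (w : 'I_s -> F) :
  (forall i, i \in I -> exists c, forall j, j \in J -> M i j = c * w j) ->
  (\rank (submx_set M I J) <= 1)%N.
Proof.
move=> rows_prop.
pose W : 'rV_#|J| := \row_j w (@enum_val _ (mem J) j).
apply: leq_trans (mxrankS (_ : (submx_set M I J <= W)%MS)) (rank_leq_row _).
apply/row_subP => i; have [c Hc] := rows_prop _ (enum_valP i).
have -> : row i (submx_set M I J) = c *: W.
  by apply/rowP => j; rewrite !mxE Hc // enum_valP.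
exact: scalemx_sub (submx_refl _).
Qed.

End SubmatrixRank.

Definition col_support (F : fieldType) (s : nat) (M : 'M[F]_s) (a : 'I_s) :
  {set 'I_s} := [set i | M i a != 0].

Definition col_diff (F : fieldType) (s : nat) (M : 'M[F]_s) (a b : 'I_s) :
  {set 'I_s} := [set i | M i a != M i b].

Lemma F2_cases (x : 'F_2) : x = 0 \/ x = 1.
Proof. by case: x => [[|[|k]] lt_x2] //; [left | right]; apply/val_inj. Qed.

Lemma F2_neq0 (x : 'F_2) : x != 0 -> x = 1.
Proof. by case: (F2_cases x) => ->. Qed.

Lemma sum_col_F2 s (M : 'M['F_2]_s) (a : 'I_s) :
  \sum_i M i a = #|col_support M a|%:R.
Proof.
rewrite -sumr_const [RHS]big_mkcond; apply: eq_bigr => i _; rewrite inE.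
by case: (F2_cases (M i a)) => ->.
Qed.

Lemma rank_submx2_F2 s (M : 'M['F_2]_s) (I : {set 'I_s}) (a b : 'I_s) : a != b ->
  \rank (submx_set M I [set a; b]) = 2%N <->
  [/\ exists2 i, i \in I & i \in col_support M a,
      exists2 i, i \in I & i \in col_support M b &
      exists2 i, i \in I & i \in col_diff M a b].
Proof.
move=> neq_ab.
have aJ : a \in [set a; b] by rewrite !inE eqxx.
have bJ : b \in [set a; b] by rewrite !inE eqxx orbT.
split=> [rank2 | [[p pI /[!inE] /F2_neq0 pa] [q qI /[!inE] /F2_neq0 qb] [r rI rab]]].
  have meets (A : {set 'I_s}) (w : 'I_s -> 'F_2) :
      (forall i, i \notin A -> exists c, forall j, j \in [set a; b] -> M i j = c * w j) ->
      exists2 i, i \in I & i \in A.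
    move=> outside; apply/exists_inP; apply: contraT => /exists_inPn none.
    by have := rank_submx_le1 (fun i iI => outside i (none i iI)); rewrite rank2.
  split; [apply: (meets _ (fun j => (j == b)%:R)) | apply: (meets _ (fun j => (j == a)%:R))
         | apply: (meets _ (fun=> 1))] => i; rewrite inE negbK => /eqP Mi.
  - exists (M i b) => j /set2P[->|->].
      by rewrite Mi (negbTE neq_ab) mulr0.
    by rewrite eqxx mulr1.
  - exists (M i a) => j /set2P[->|->].
      by rewrite eqxx mulr1.
    by rewrite Mi eq_sym (negbTE neq_ab) mulr0.
  - by exists (M i a) => j /set2P[->|->]; rewrite ?Mi mulr1.
apply/eqP; rewrite eqn_leq (leq_trans (rank_leq_col _)) ?cards2 ?neq_ab //=.
move: rab; rewrite inE.
have [ra|ra] := F2_cases (M r a); have [rb|rb] := F2_cases (M r b); rewrite ra rb // => _.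
- apply: (rank_submx_ge2 rI pI aJ bJ).
  by rewrite ra rb pa !mul0r mul1r sub0r oppr_eq0 oner_eq0.
- apply: (rank_submx_ge2 rI qI aJ bJ).
  by rewrite ra rb qb !mul0r mul1r subr0 oner_eq0.
Qed.

Lemma linear_AONT_2_F2 s (M : 'M['F_2]_s) : (2 < s)%N ->
  linear_AONT 2 s.-1 M <->
  [/\ M \in unitmx, forall a, (1 < #|col_support M a|)%N &
      forall a b, a != b -> (1 < #|col_diff M a b|)%N].
Proof.
move=> s_gt2; have meetsP := card_gt1_meets_setC1 (Ordinal (ltnW (ltnW s_gt2))).
rewrite card_ord in meetsP.
split=> [[_ _ _ unitM rank2] | [unitM weight dist]].
  have card_pair (a b : 'I_s) : a != b -> #|[set a; b]| = 2%N by rewrite cards2 => ->.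
  have rank2_F2 (a b : 'I_s) (I : {set 'I_s}) (neq_ab : a != b) (cardI : #|I| = s.-1) :=
    (rank_submx2_F2 M I neq_ab).1 (rank2 I _ cardI (card_pair a b neq_ab)).
  split=> // [a | a b neq_ab]; apply/meetsP => I cardI.
    have /card_gt0P [b] : (0 < #|[set~ a]|)%N by rewrite cardsC1 card_ord; lia.
    by rewrite !inE eq_sym => neq_ab; case: (rank2_F2 a b I neq_ab cardI).
  by case: (rank2_F2 a b I neq_ab cardI).
split=> //; [lia | exact: leq_pred |].
move=> I J cardI /eqP/cards2P [a [b [neq_ab ->]]].
apply/(rank_submx2_F2 M I neq_ab).
by split; [move: (weight a) | move: (weight b) | move: (dist a b neq_ab)] => /meetsP; apply.
Qed.

Lemma F2_3_col_weight2 (M : 'M['F_2]_3) :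
  (forall a, (1 < #|col_support M a|)%N) ->
  (forall a b, a != b -> (1 < #|col_diff M a b|)%N) ->
  forall a, #|col_support M a| = 2%N.
Proof.
move=> weight dist a; apply/eqP; rewrite eqn_leq weight andbT.
apply: contraT; rewrite -ltnNge => full.
have supp_a : col_support M a = setT.
  by apply/eqP; rewrite eqEcard subsetT cardsT card_ord.
have /card_gt0P [b] : (0 < #|[set~ a]|)%N by rewrite cardsC1 card_ord.
rewrite !inE eq_sym => neq_ab.
have diffE : col_diff M a b = ~: col_support M b.
  apply/setP => i; have := in_setT i; rewrite -supp_a !inE => /F2_neq0 ->.
  by case: (F2_cases (M i b)) => ->.
have := dist a b neq_ab; rewrite diffE.
have := weight b; have := cardsC (col_support M b); rewrite card_ord.
lia.
Qed.

Lemma F2_3_not_unitmx (M : 'M['F_2]_3) :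
  (forall a, (1 < #|col_support M a|)%N) ->
  (forall a b, a != b -> (1 < #|col_diff M a b|)%N) ->
  M \notin unitmx.
Proof.
move=> weight dist; rewrite -row_free_unit; apply/negP => /mulmx_free_eq0 free.
have : const_mx 1 *m M == 0 :> 'rV_3.
  apply/eqP/rowP => j; rewrite !mxE (eq_bigr (fun i => M i j)) => [|i _]; last first.
    by rewrite mxE mul1r.
  by rewrite sum_col_F2 (F2_3_col_weight2 weight dist); apply/eqP.
by rewrite free => /eqP/rowP/(_ ord0)/eqP; rewrite !mxE oner_eq0.
Qed.

Definition cycle3 (i j : nat) : bool := (i < 3)%N && (j == i.+1 %% 3)%N.

Definition aont_pattern (i j : nat) : bool := ~~ ((i == j) || cycle3 i j).

Definition cycle_aont_mx s : 'M['F_2]_s := \matrix_(i, j) (aont_pattern i j)%:R.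

Lemma col_support_cycle_aont_mx s (a : 'I_s) :
  col_support (cycle_aont_mx s) a = [set i : 'I_s | aont_pattern i a].
Proof. by apply/setP => i; rewrite !inE mxE; case: aont_pattern. Qed.

Lemma col_diff_cycle_aont_mx s (a b : 'I_s) :
  col_diff (cycle_aont_mx s) a b = [set i : 'I_s | aont_pattern i a != aont_pattern i b].
Proof. by apply/setP => i; rewrite !inE !mxE; do 2 case: aont_pattern. Qed.

Lemma cycle_aont_mx_weight s (a : 'I_s) : (3 < s)%N ->
  (1 < #|col_support (cycle_aont_mx s) a|)%N.
Proof.
rewrite col_support_cycle_aont_mx => s_gt3; have [a_lt3 | a_ge3] := ltnP a 3.
  by apply: (card_gt1_ord (P := aont_pattern^~ a) (i := 3) (j := a.+1 %% 3));
    rewrite /aont_pattern /cycle3; lia.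
by apply: (card_gt1_ord (P := aont_pattern^~ a) (i := 0) (j := 1));
  rewrite /aont_pattern /cycle3; lia.
Qed.

(* Row a separates the columns a and b unless a precedes b on the cycle, and
   symmetrically; 3 - a - b is then the third point of the cycle. *)
Lemma cycle_aont_mx_dist s (a b : 'I_s) : (2 < s)%N -> a != b ->
  (1 < #|col_diff (cycle_aont_mx s) a b|)%N.
Proof.
rewrite col_diff_cycle_aont_mx -val_eqE /= => s_gt2 neq_ab.
pose P k := aont_pattern k a != aont_pattern k b.
have lt_a := ltn_ord a; have lt_b := ltn_ord b.
have [ab | nab] := boolP (cycle3 a b).
  by apply: (card_gt1_ord (P := P) (i := b) (j := 3 - a - b));
    move: ab; rewrite /P /aont_pattern /cycle3; lia.
have [ba | nba] := boolP (cycle3 b a).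
  by apply: (card_gt1_ord (P := P) (i := a) (j := 3 - a - b));
    move: ba; rewrite /P /aont_pattern /cycle3; lia.
by apply: (card_gt1_ord (P := P) (i := a) (j := b));
  move: nab nba; rewrite /P /aont_pattern /cycle3; lia.
Qed.

Lemma aont_patternE (i j : nat) :
  (aont_pattern i j)%:R = 1 + (i == j)%:R + (cycle3 i j)%:R :> 'F_2.
Proof.
have : ~~ ((i == j) && cycle3 i j) by rewrite /cycle3; lia.
by rewrite /aont_pattern; case: (i == j); case: (cycle3 i j) => //= _; apply/eqP.
Qed.

Lemma cycle_aont_mx_mul_col s (x : 'rV['F_2]_s) (j : 'I_s) :
  (x *m cycle_aont_mx s) 0 j
    = \sum_i x 0 i + x 0 j + \sum_(i : 'I_s | cycle3 i j) x 0 i.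
Proof.
pose expand i := x 0 i + x 0 i * (i == j :> nat)%:R + x 0 i * (cycle3 i j)%:R.
rewrite !mxE (eq_bigr expand) => [|i _]; last first.
  by rewrite mxE aont_patternE !mulrDr mulr1.
have pick_j : \sum_(i : 'I_s | (i : nat) == j) x 0 i = x 0 j.
  by apply: big_pred1 => i; apply: val_eqE.
by rewrite !big_split /= !sum_mulr_natr_bool pick_j.
Qed.

Lemma F2_cycle3_eq (t x0 x1 x2 : 'F_2) :
  t + x0 + x2 = 0 -> t + x1 + x0 = 0 -> t + x2 + x1 = 0 ->
  [/\ t = 0, x1 = x0 & x2 = x0].
Proof.
by case: (F2_cases t) => ->; case: (F2_cases x0) => ->; case: (F2_cases x1) => ->;
  case: (F2_cases x2) => ->.
Qed.

Lemma cycle_aont_mx_unit s : (2 < s)%N -> cycle_aont_mx s \in unitmx.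
Proof.
move=> s_gt2; rewrite -row_free_unit; apply: inj_row_free => x /rowP x_ker.
set t := \sum_i x 0 i.
have col j : t + x 0 j + \sum_(i : 'I_s | cycle3 i j) x 0 i = 0.
  by rewrite -cycle_aont_mx_mul_col x_ker mxE.
have [lt0 lt1] : (0 < s)%N /\ (1 < s)%N by lia.
pose i0 := Ordinal lt0; pose i1 := Ordinal lt1; pose i2 := Ordinal s_gt2.
have col_cycle (j i : 'I_s) :
    (forall k : 'I_s, cycle3 k j = (k == i)) -> t + x 0 j + x 0 i = 0.
  by move=> pred_j; rewrite -(col j) (big_pred1 i).
have [t0 x10 x20] : [/\ t = 0, x 0 i1 = x 0 i0 & x 0 i2 = x 0 i0].
  by apply: F2_cycle3_eq; apply: col_cycle => k; rewrite -val_eqE /cycle3 /=; lia.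
have x_hi (j : 'I_s) : (3 <= j)%N -> x 0 j = 0.
  move=> j_ge3; have := col j; rewrite big_pred0 => [|k]; last by rewrite /cycle3; lia.
  by rewrite t0 add0r addr0.
have x0_0 : x 0 i0 = 0.
  rewrite -t0 /t (bigD1 i0) // (bigD1 i1) // (bigD1 i2) //= big1 ?addr0 => [|k].
    by rewrite x10 x20; case: (F2_cases (x 0 i0)) => ->; apply/eqP.
  by rewrite -!val_eqE /= => ne012; apply: x_hi; lia.
apply/rowP => j; rewrite mxE; have [j_lt3 | /x_hi //] := ltnP j 3.
have : [|| j == i0, j == i1 | j == i2] by rewrite -!val_eqE /=; lia.
by case/or3P => /eqP ->; rewrite ?x10 ?x20.
Qed.

Theorem mainTheorem15 (s : nat) (hs : (0 < s)%N) :
  (exists M : 'M['F_2]_s, linear_AONT 2 s.-1 M) <-> (4 <= s)%N.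
Proof.
split=> [[M aontM] | s_ge4].
  case: s hs M aontM => [|[|[|[|n]]]] // _ M aontM; try by case: aontM.
  have [unitM weight dist] := (linear_AONT_2_F2 M isT).1 aontM.
  by move: unitM; rewrite (negbTE (F2_3_not_unitmx weight dist)).
exists (cycle_aont_mx s); apply/linear_AONT_2_F2; first lia.
split=> [|a|a b];
  [apply: cycle_aont_mx_unit | apply: cycle_aont_mx_weight | apply: cycle_aont_mx_dist]; lia.
Qed.
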